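(* Let $\ell\in\mathbb{Z}_{\ge 2}$ and let $b_{n,m}=b_{n,m}(\ell)$ be as in the context. Define rational functions $R_{\ell-j}(x)$ for $2\le j\le \ell$ by $R_{\ell-2}(x)=1$, $R_{\ell-3}(x)=x^{-1}$, and $R_{\ell-j}(x)=x^{-1}R_{\ell-j+1}(x)-R_{\ell-j+2}(x)$ for $j>3$. Then for every $2\le j\le \ell$, as formal power series in $x$, $$\sum_{\substack{m\ge 0,\ m\equiv \ell-j \bmod \ell\\ n\ge \ell-j}} b_{n,m}x^n \;=\; R_{\ell-j}(x)\sum_{\substack{m\ge 0,\ m\equiv \ell-2\bmod \ell\\ n\ge \ell-2}} b_{n,m}x^n .$$
   Context: For $n,m\in\mathbb{Z}_{\ge 0}$, $a_{n,m}$ is the number of sequences of integers $(x_0,\dots,x_n)$ with $x_0=0$, $x_n=m$, all $x_i\ge 0$ and $|x_i-x_{i-1}|=1$ (unit step paths on $\mathbb{Z}_{\ge 0}$ from $0$ to $m$ of length $n$). For fixed $\ell\in\mathbb{Z}_{\ge2}$, the numbers $b_{n,m}=b_{n,m}(\ell)$ ($n,m\ge 0$) are defined by: $b_{n,m}=a_{n,m}$ if $m\equiv -1\pmod \ell$; $b_{n,m}=b_{n-1,m-1}+b_{n-1,m+1}$ if $m\equiv m_0\pmod\ell$ with $0\le m_0<\ell-2$; $b_{n,m}=b_{n-1,m-1}$ if $m\equiv -2\pmod \ell$. Here the recursion is used for $n\ge 1$, with initial values $b_{0,0}=1$, $b_{0,m}=0$ for $m>0$, and the convention $b_{n,-1}=0$.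 (In particular $b_{n,m}=0$ for $m>n$.) *)

From mathcomp Require Import all_boot all_order all_algebra.
Set Implicit Arguments. Unset Strict Implicit. Unset Printing Implicit Defensive.
Import GRing.Theory Num.Theory.

(* a_{n,m}: number of sequences (x_0,...,x_n) of nonnegative integers with
   x_0 = 0, x_n = m and |x_i - x_{i-1}| = 1.  Such a sequence automatically has
   all x_i <= n, so we encode it as a finite function 'I_(n+1) -> 'I_(n+1). *)
Definition apath (n m : nat) : nat :=
  #|[set f : {ffun 'I_n.+1 -> 'I_n.+1} |
      [&& val (f ord0) == 0%N, val (f ord_max) == m &
          [forall i : 'I_n.+1, (i < n)%N ==>
             (val (f (inord i.+1)) == (val (f i)).+1) ||
             ((val (f i)) == (val (f (inord i.+1))).+1)]]]|.

(* b_{n,m}(l), for l >= 2: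
   - b_{n,m} = a_{n,m}                     if m = -1 (mod l);
   - b_{0,0} = 1, b_{0,m} = 0 (m > 0)       (consistent with the first clause);
   - b_{n,m} = b_{n-1,m-1}                 if m = -2 (mod l), n >= 1;
   - b_{n,m} = b_{n-1,m-1} + b_{n-1,m+1}   if m mod l < l-2, n >= 1;
   with the convention b_{n,-1} = 0. *)
Fixpoint bseq (l n : nat) : nat -> nat := fun m =>
  if m %% l == l.-1 then apath n m else
  match n with
  | 0 => (m == 0)%N : nat
  | n'.+1 =>
      let down := (if m is m'.+1 then bseq l n' m' else 0) in
      if m %% l == l.-2 then down else down + bseq l n' m.+1
  end.

(* Coefficient of x^n (n an integer) in the series
     sum_{m >= 0, m = r mod l, n >= r} b_{n,m} x^n   (zero for n < 0).
   Since b_{n,m} = 0 for m > n, the sum over m is restricted to m <= n. *)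
Definition Lcoef (l r : nat) (n : int) : int :=
  match n with
  | Posz n' => if (r <= n')%N then
                 Posz (\sum_(m < n'.+1 | m %% l == r) bseq l n' m)
               else 0
  | Negz _ => 0
  end.

(* Rpoly k is the polynomial P_k(y) with R_{l-(k+2)}(x) = P_k(x^{-1}):
   P_0 = 1, P_1 = y, P_{k+2} = y P_{k+1} - P_k. *)
Fixpoint Rpair (k : nat) : {poly int} * {poly int} :=
  match k with
  | 0 => (1%R, 'X%R)
  | k'.+1 => let: (p, q) := Rpair k' in (q, ('X * q - p)%R)
  end.
Definition Rpoly (k : nat) : {poly int} := (Rpair k).1.

From mathcomp Require Import all_boot all_order all_algebra.
From mathcomp Require Import zify.
Import GRing.Theory Num.Theory.

(* Write L_r for the series of the residue class r.  For r < l-2 the rule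
   b_{n+1,m+1} = b_{n,m} + b_{n,m+2} with m+1 = r+1 (mod l) gives
   L_r = x^{-1} L_{r+1} - L_{r+2}, and the rule b_{n+1,m+1} = b_{n,m} with
   m+1 = l-2 (mod l) gives L_{l-3} = x^{-1} L_{l-2}.  Hence
   L_{l-2-k} = P_k(x^{-1}) L_{l-2} by two-step induction on k, since the
   polynomials P_k = Rpoly k satisfy the same recursion. *)

Lemma apath_eq0 n m : (n < m)%N -> apath n m = 0%N.
Proof.
move=> lt_nm; apply/eqP; rewrite cards_eq0; apply/eqP/setP => f.
rewrite !inE; apply/negP => /and3P [_ /eqP f_max _].
by have := ltn_ord (f ord_max); rewrite f_max ltnS leqNgt lt_nm.
Qed.

Section Rows.

Variable l : nat.
Hypothesis l_ge2 : (2 <= l)%N.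

Lemma bseq_eq0 n m : (n < m)%N -> bseq l n m = 0%N.
Proof.
elim: n m => [|n IHn] [|m] //= lt_nm; case: ifP => _; rewrite ?apath_eq0 //.
by rewrite IHn // add0n IHn ?if_same //; lia.
Qed.

Lemma bseqS_top n m : (m.+1 %% l == l.-2)%N -> bseq l n.+1 m.+1 = bseq l n m.
Proof.
move=> /eqP /= ->; have -> : (l.-2 == l.-1) = false by apply/eqP; lia.
by rewrite eqxx.
Qed.

Lemma bseqS_mid n m : (m.+1 %% l < l.-2)%N ->
  bseq l n.+1 m.+1 = (bseq l n m + bseq l n m.+2)%N.
Proof.
move=> lt_m /=.
have -> : (m.+1 %% l == l.-1) = false by apply/eqP; lia.
by have -> : (m.+1 %% l == l.-2) = false by apply/eqP; lia.
Qed.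

Lemma eqn_modS m r : (r.+1 < l)%N -> (m.+1 %% l == r.+1) = (m %% l == r).
Proof.
move=> lt_r; rewrite -[r.+1 in LHS](modn_small lt_r).
rewrite -[r in RHS](modn_small (ltnW lt_r)).
by rewrite -(addn1 m) -(addn1 r) eqn_modDr.
Qed.

Lemma sum_modS r N (F : nat -> nat) : (r.+1 < l)%N ->
  (\sum_(m < N.+1 | m %% l == r.+1) F m = \sum_(m < N | m %% l == r) F m.+1)%N.
Proof.
move=> lt_r; rewrite big_mkcond big_ord_recl /= mod0n add0n [RHS]big_mkcond.
by apply: eq_bigr => m _; rewrite /bump add1n eqn_modS.
Qed.

Definition colsum r n := (\sum_(m < n.+1 | m %% l == r) bseq l n m)%N.

Lemma colsum_widen r {n N} : (n < N)%N ->
  colsum r n = (\sum_(m < N | m %% l == r) bseq l n m)%N.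
Proof.
move=> lt_nN; rewrite /colsum.
rewrite (big_ord_widen_cond _ (fun m => m %% l == r) (bseq l n) lt_nN).
rewrite big_mkcond [RHS]big_mkcond; apply: eq_bigr => m _.
by case: (m %% l == r); case: ltnP => //= le_nm; rewrite bseq_eq0.
Qed.

Lemma colsumS_top n : (3 <= l)%N -> colsum (l - 2) n.+1 = colsum (l - 3) n.
Proof.
move=> l_ge3; have l2E : (l - 2 = (l - 3).+1)%N by lia.
rewrite {1}/colsum l2E sum_modS -?l2E; last by lia.
by apply: eq_bigr => m m_mod; rewrite bseqS_top // -subn2 l2E eqn_modS //; lia.
Qed.

Lemma colsumS_mid r n : (r.+3 < l)%N ->
  colsum r.+1 n.+1 = (colsum r n + colsum r.+2 n)%N.
Proof.
move=> lt_r; rewrite {1}/colsum sum_modS; last by lia.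
rewrite (colsum_widen r.+2 (leqW (leqnSn n.+1))) sum_modS; last by lia.
rewrite (sum_modS _ _ (fun m => bseq l n m.+1)) -?big_split; last by lia.
apply: eq_bigr => m m_mod.
have /eqP mS_mod : m.+1 %% l == r.+1 by rewrite eqn_modS //; lia.
by rewrite bseqS_mid // mS_mod; lia.
Qed.

Lemma Lcoef_Posz r n : Lcoef l r (Posz n) = Posz (colsum r n).
Proof.
rewrite /Lcoef; case: leqP => // lt_nr.
rewrite /colsum big1 // => m /eqP m_mod.
by have := leq_mod m l; have := ltn_ord m; rewrite m_mod; lia.
Qed.

Local Open Scope ring_scope.

Lemma Lcoef_top (n : int) : (3 <= l)%N ->
  Lcoef l (l - 3) n = Lcoef l (l - 2) (n + 1).
Proof.
move=> l_ge3; case: n => [n|[|n]] //; last by rewrite /Lcoef; case: ifP; lia.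
by rewrite -(PoszD n 1) addn1 !Lcoef_Posz colsumS_top.
Qed.

Lemma Lcoef_rec r (n : int) : (r.+3 < l)%N ->
  Lcoef l r n = Lcoef l r.+1 (n + 1) - Lcoef l r.+2 n.
Proof.
move=> lt_r; case: n => [n|[|n]]; rewrite ?subr0 //.
by rewrite -(PoszD n 1) addn1 !Lcoef_Posz colsumS_mid // PoszD addrK.
Qed.

End Rows.

Local Open Scope ring_scope.

Section ReversedConvolution.

Context {R : nzRingType}.

(* The coefficient of x^n in p(x^{-1}) * F(x), where F has coefficients f. *)
Definition revconv (p : {poly R}) (f : int -> R) (n : int) : R :=
  \sum_(k < size p) p`_k * f (n + k%:Z).

Lemma revconv_widen {p : {poly R}} (f : int -> R) (n : int) {N} :
  (size p <= N)%N -> revconv p f n = \sum_(k < N) p`_k * f (n + k%:Z).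
Proof.
move=> le_pN; rewrite /revconv.
rewrite (big_ord_widen N (fun k => p`_k * f (n + k%:Z)) le_pN).
rewrite big_mkcond; apply: eq_bigr => k _.
by case: ltnP => // le_pk; rewrite nth_default ?mul0r.
Qed.

Lemma revconv1 (f : int -> R) (n : int) : revconv 1 f n = f n.
Proof. by rewrite /revconv size_poly1 big_ord1 coef1 mul1r addr0. Qed.

Lemma revconvB (p q : {poly R}) (f : int -> R) (n : int) :
  revconv (p - q) f n = revconv p f n - revconv q f n.
Proof.
pose N := maxn (size p) (size q).
have le_pN : (size p <= N)%N := leq_maxl _ _.
have le_qN : (size q <= N)%N := leq_maxr _ _.
have le_pqN : (size (p - q)%R <= N)%N.
  by rewrite (leq_trans (size_polyD _ _)) // size_polyN geq_max le_pN.
rewrite (revconv_widen _ _ le_pqN) (revconv_widen _ _ le_pN).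
rewrite (revconv_widen _ _ le_qN) -sumrB.
by apply: eq_bigr => k _; rewrite coefB mulrBl.
Qed.

Lemma revconvXM (q : {poly R}) (f : int -> R) (n : int) :
  revconv ('X * q) f n = revconv q f (n + 1).
Proof.
rewrite (@revconv_widen _ _ _ (size q).+1); last first.
  by rewrite (leq_trans (size_polyMleq _ _)) // size_polyX.
rewrite big_ord_recl coefXM eqxx mul0r add0r; apply: eq_bigr => k _.
by rewrite coefXM lift0 -addrA -PoszD add1n.
Qed.

End ReversedConvolution.

Lemma Rpoly1 : Rpoly 1 = 'X.
Proof. by []. Qed.

Lemma RpolySS k : Rpoly k.+2 = 'X * Rpoly k.+1 - Rpoly k.
Proof. by rewrite /Rpoly /=; case: (Rpair k). Qed.

Lemma Lcoef_Rpoly l k : (2 <= l)%N -> (k <= l - 2)%N ->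
  Lcoef l (l - 2 - k) =1 revconv (Rpoly k) (Lcoef l (l - 2)).
Proof.
move=> l_ge2; elim: k {-2}k (leqnn k) => [|k IHk] [|[|i]] le_ik le_il n //.
1,2: by rewrite subn0 revconv1.
- have -> : (l - 2 - 1 = l - 3)%N by lia.
  by rewrite Rpoly1 -[X in revconv X]mulr1 revconvXM revconv1 -Lcoef_top //; lia.
rewrite RpolySS revconvB revconvXM -!IHk; try lia.
have -> : (l - 2 - i.+1 = (l - 2 - i.+2).+1)%N by lia.
have -> : (l - 2 - i = (l - 2 - i.+2).+2)%N by lia.
by rewrite -Lcoef_rec //; lia.
Qed.

Theorem lemma2p8 (l j : nat) (n : int) :
  (2 <= l)%N -> (2 <= j <= l)%N ->
  Lcoef l (l - j) n =
    \sum_(k < size (Rpoly (j - 2))) (Rpoly (j - 2))`_k * Lcoef l (l - 2) (n + k%:Z).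
Proof.
move=> l_ge2 /andP [j_ge2 j_le].
have -> : (l - j = l - 2 - (j - 2))%N by lia.
by rewrite Lcoef_Rpoly //; lia.
Qed.
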